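(* Let $A$ be an aperiodic binary sequence of length $n\ge 2$. Then every binary $k'$-stage machine that generates $A$ satisfies $k'\ge k$, where \[ k=\max\bigl(\lceil \log_2 wt(A)\rceil,\ \lceil \log_2 (n-wt(A))\rceil\bigr)+1 . \] Consequently (together with the existence of a generating binary $k$-stage machine) $k$ is exactly the minimum number of stages of a binary machine generating $A$.
   Context: A binary sequence of length $n$ is an $n$-tuple $A=(a_0,\ldots,a_{n-1})\in\{0,1\}^n$; its Hamming weight $wt(A)$ is the number of 1s. $A$ is called aperiodic if it is not of the form $B B\cdots B$ ($m\ge 2$ copies) for a shorter binary sequence $B$. A binary $k$-stage machine consists of $k$ stages $0,1,\ldots,k-1$, each holding one bit; its state is the vector $(x_{k-1},\ldots,x_1,x_0)\in\{0,1\}^k$. Each stage $j$ has its own arbitrary Boolean next-state function $f_j:\{0,1\}^k\to\{0,1\}$ (arbitrary feedback and feedforward dependencies allowed), and at each clock step the state $x$ is replaced by $(f_{k-1}(x),\ldots,f_0(x))$. The output at each time step is the content of stage $0$. The machine generates $A$ if for some initial state the output sequence is the periodic sequence $a_0,a_1,\ldots,a_{n-1},a_0,a_1,\ldots$. *)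

From mathcomp Require Import all_boot.
Set Implicit Arguments. Unset Strict Implicit. Unset Printing Implicit Defensive.

Definition wt (A : seq bool) : nat := count id A.

Definition aperiodic (A : seq bool) : Prop :=
  ~ exists (B : seq bool) (m : nat), 2 <= m /\ A = flatten (nseq m B).

Definition state (k : nat) := {ffun 'I_k -> bool}.

Definition machine (k : nat) := 'I_k -> state k -> bool.

Definition step (k : nat) (f : machine k) (x : state k) : state k :=
  [ffun j => f j x].

(* f generates A if for some initial state the output (content of stage 0)
   is the periodic sequence a_0, ..., a_{n-1}, a_0, ... *)
Definition generates (k : nat) (f : machine k) (A : seq bool) : Prop :=
  exists (H : 0 < k) (x0 : state k),
    forall t : nat, iter t (step f) x0 (Ordinal H) = nth false A (t %% size A).

(* ceil(log2 m) for m >= 1: smallest e with m <= 2^e (up_log from prime.v). *)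
Definition clog2 (m : nat) : nat := up_log 2 m.

Definition min_stages (A : seq bool) : nat :=
  maxn (clog2 (wt A)) (clog2 (size A - wt A)) + 1.

From mathcomp Require Import all_boot zify.
Set Implicit Arguments. Unset Strict Implicit. Unset Printing Implicit Defensive.

(* If a k-stage machine generates the aperiodic sequence A of length n, its
   states at times 0, ..., n-1 are pairwise distinct: a repeated state would
   make A invariant under a proper cyclic shift d, hence under the shift by
   gcd(d, n), which exhibits A as a power of its prefix of that length.  The
   wt(A) states at times with output 1 agree on stage 0, so they differ on the
   other k-1 stages and wt(A) <= 2^(k-1); likewise n - wt(A) <= 2^(k-1).
   Conversely, k-1 stages can hold the rank of the current position among the
   positions carrying the same bit; as (bit, rank) determines the position,
   the n states so obtained are distinct and the cyclic successor map on them
   is a k-stage machine generating A. *)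

Section ShiftInvariance.

Variables (T : Type) (x0 : T).

Lemma size_flatten_nseq (B : seq T) m : size (flatten (nseq m B)) = m * size B.
Proof. by elim: m => //= m IHm; rewrite size_cat IHm mulSn. Qed.

Lemma nth_flatten_nseq (B : seq T) m i : i < m * size B ->
  nth x0 (flatten (nseq m B)) i = nth x0 B (i %% size B).
Proof.
elim: m i => [|m IHm] i //=; rewrite mulSn nth_cat => lt_i.
case: ltnP => [iB|Bi]; first by rewrite modn_small.
rewrite IHm; last by rewrite ltn_subLR.
by rewrite -[in RHS](subnK Bi) modnDr.
Qed.

Variable s : seq T.
Local Notation n := (size s).

Definition shift_invariant (d : nat) :=
  forall i, nth x0 s ((i + d) %% n) = nth x0 s (i %% n).

Lemma shift_invariantM d j : shift_invariant d -> shift_invariant (d * j).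
Proof.
by move=> sd; elim: j => [|j IHj] i; rewrite ?muln0 ?addn0 // mulnS addnA IHj sd.
Qed.

Lemma shift_invariant_gcd d : 0 < d -> shift_invariant d -> shift_invariant (gcdn d n).
Proof.
move=> d_gt0 sd i; have := egcdnP n d_gt0; case: (egcdn d n) => _ _ [ka kb Eg _].
by rewrite -(shift_invariantM ka sd i) (mulnC d) Eg addnCA modnMDl.
Qed.

Lemma nth_mod_period g i : g <= n -> shift_invariant g -> i < n ->
  nth x0 s i = nth x0 s (i %% g).
Proof.
move=> gn sg i_lt_n.
have shiftq q r : nth x0 s ((q * g + r) %% n) = nth x0 s (r %% n).
  by elim: q => // q IHq; rewrite mulSn -addnA addnC sg IHq.
rewrite -{1}(modn_small i_lt_n) {1}(divn_eq i g) shiftq.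
by rewrite (modn_small (leq_ltn_trans (leq_mod i g) i_lt_n)).
Qed.

Lemma flatten_nseq_take g : 0 < g -> g %| n -> shift_invariant g ->
  s = flatten (nseq (n %/ g) (take g s)).
Proof.
move=> g_gt0 g_dvd_n sg; have [/size0nil -> |n_gt0] := posnP n; first by rewrite div0n.
have size_take_g : size (take g s) = g by rewrite size_takel // dvdn_leq.
apply: (@eq_from_nth _ x0) => [|i i_lt_n].
  by rewrite size_flatten_nseq size_take_g divnK.
rewrite nth_flatten_nseq size_take_g ?divnK // nth_take ?ltn_pmod //.
by rewrite -nth_mod_period // dvdn_leq.
Qed.

End ShiftInvariance.

Lemma shift_invariant_not_aperiodic (A : seq bool) d :
  0 < d < size A -> shift_invariant false A d -> ~ aperiodic A.
Proof.
case/andP=> d_gt0 d_lt_n /(shift_invariant_gcd d_gt0); set g := gcdn d _ => sg.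
have g_gt0 : 0 < g by rewrite gcdn_gt0 d_gt0.
have g_dvd_n : g %| size A by apply: dvdn_gcdr.
have g_lt_n : g < size A by apply: leq_ltn_trans (dvdn_leq d_gt0 (dvdn_gcdl d _)) d_lt_n.
apply; exists (take g A), (size A %/ g); split; last exact: flatten_nseq_take.
by rewrite ltn_divRL // mul1n.
Qed.

Lemma card_nth_pred (T : Type) (x0 : T) (s : seq T) (p : pred T) :
  #|[pred i : 'I_(size s) | p (nth x0 s i)]| = count p s.
Proof.
rewrite -sum1_card (eq_bigl (fun i : 'I__ => p (nth x0 s i))) //.
rewrite -(big_mkord (fun i => p (nth x0 s i)) (fun _ => 1)) sum1_count.
by rewrite /index_iota subn0 -[in RHS](mkseq_nth x0 s) count_map.
Qed.

Lemma count_pred1_wt (A : seq bool) b :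
  count (pred1 b) A = if b then wt A else size A - wt A.
Proof.
case: b; first by apply: eq_count => -[].
by rewrite -(count_predC id A) addKn; apply: eq_count => -[].
Qed.

Lemma min_stages_le (A : seq bool) k :
  (forall b, count (pred1 b) A <= 2 ^ k) -> min_stages A <= k.+1.
Proof.
move=> count_le; rewrite /min_stages addn1 ltnS geq_max /clog2.
have := count_le true; have := count_le false; rewrite !count_pred1_wt /=.
by move=> n_wt_le wt_le; rewrite !up_log_min.
Qed.

Lemma count_le_min_stages (A : seq bool) b :
  count (pred1 b) A <= 2 ^ (min_stages A).-1.
Proof.
rewrite /min_stages addn1 count_pred1_wt.
by case: b; apply: leq_trans (@up_logP 2 _ _) _; rewrite // leq_exp2l // ?leq_maxl ?leq_maxr.
Qed.

Lemma card_state k : #|state k| = 2 ^ k.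
Proof. by rewrite card_ffun card_bool card_ord. Qed.

Definition state_tail k (x : state k.+1) : state k := [ffun j => x (lift ord0 j)].

Definition state_cons k (b : bool) (y : state k) : state k.+1 :=
  [ffun j => if unlift ord0 j is Some j' then y j' else b].

Lemma state_cons0 k b (y : state k) : state_cons b y ord0 = b.
Proof. by rewrite ffunE unlift_none. Qed.

Lemma state_consK k b (y : state k) : state_tail (state_cons b y) = y.
Proof. by apply/ffunP => j; rewrite !ffunE liftK. Qed.

Lemma eq_state_tail k (x y : state k.+1) :
  x ord0 = y ord0 -> state_tail x = state_tail y -> x = y.
Proof.
move=> xy0 /ffunP xy_tail; apply/ffunP => j.
by case: (unliftP ord0 j) => [j' ->|->] //; have := xy_tail j'; rewrite !ffunE.
Qed.

Section Generation.

Variables (A : seq bool) (k : nat) (f : machine k.+1) (x0 : state k.+1).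
Local Notation n := (size A).
Local Notation x t := (iter t (step f) x0).
Hypothesis output : forall t, x t ord0 = nth false A (t %% n).

Lemma repeated_state_shift_invariant a b :
  a <= b -> a <= n -> x a = x b -> shift_invariant false A (b - a).
Proof.
move=> ab a_le_n xab i.
have later s : x (s + a) = x (s + b) by rewrite !iterD xab.
have := congr1 (fun y : state k.+1 => y ord0) (later (i + (n - a))).
rewrite !output.
have -> : i + (n - a) + a = i + n by lia.
have -> : i + (n - a) + b = i + (b - a) + n by lia.
by rewrite !modnDr => ->.
Qed.

Lemma trajectory_inj : aperiodic A -> {in [pred t | t < n] &, injective (fun t => x t)}.
Proof.
move=> aperA a b; rewrite !inE => a_lt_n b_lt_n.
wlog ab : a b a_lt_n b_lt_n / a <= b.
  move=> wlog_ab xab; case: (leqP a b) => [ab|/ltnW ba]; first exact: wlog_ab.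
  exact/esym/wlog_ab.
move=> xab; apply/eqP; rewrite eqn_leq ab leqNgt; apply/negP => a_lt_b.
apply: (@shift_invariant_not_aperiodic A (b - a)) aperA.
  by rewrite subn_gt0 a_lt_b (leq_ltn_trans (leq_subr a b)).
exact: repeated_state_shift_invariant (ltnW a_lt_n) xab.
Qed.

Lemma count_pred1_le_exp b : aperiodic A -> count (pred1 b) A <= 2 ^ k.
Proof.
move=> aperA; rewrite -(card_nth_pred false) -card_state.
apply: (@leq_card_in _ _ (fun t : 'I_n => state_tail (x t))) => s t.
rewrite !inE => /eqP sb /eqP tb /= xst.
apply/val_inj/(trajectory_inj aperA); rewrite ?inE ?ltn_ord //.
by apply: eq_state_tail xst; rewrite !output !modn_small // sb tb.
Qed.

End Generation.

Lemma generates_min_stages_le (A : seq bool) k (f : machine k) :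
  aperiodic A -> generates f A -> min_stages A <= k.
Proof.
case: k f => [|k] f aperA [k_gt0 [x0 output]] //.
apply: min_stages_le => b; apply: (count_pred1_le_exp (f := f) (x0 := x0)) aperA.
by move=> t; rewrite -output; congr (_ _); apply: val_inj.
Qed.

Section OccurrenceRank.

Variables (T : eqType) (x0 : T) (s : seq T).

Definition occurrence_rank t := count (pred1 (nth x0 s t)) (take t s).

Lemma occurrence_rank_lt t : t < size s ->
  occurrence_rank t < count (pred1 (nth x0 s t)) s.
Proof.
move=> t_lt_n; rewrite /occurrence_rank; set a := nth x0 s t.
rewrite -[in X in _ < X](cat_take_drop t s) count_cat (drop_nth x0 t_lt_n) /=.
by rewrite eqxx -[X in X < _]addn0 ltn_add2l.
Qed.

Lemma occurrence_rank_ltn t1 t2 : t1 < t2 -> t2 <= size s ->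
  nth x0 s t1 = nth x0 s t2 -> occurrence_rank t1 < occurrence_rank t2.
Proof.
move=> t12 t2_le_n eq_nth; rewrite /occurrence_rank -eq_nth -(subnKC (ltnW t12)).
rewrite takeD count_cat (drop_nth x0 (leq_trans t12 t2_le_n)) -[X in X < _]addn0.
by rewrite ltn_add2l -(subnSK t12) /= eqxx.
Qed.

Lemma occurrence_rank_inj t1 t2 : t1 < size s -> t2 < size s ->
  nth x0 s t1 = nth x0 s t2 -> occurrence_rank t1 = occurrence_rank t2 -> t1 = t2.
Proof.
move=> t1_lt_n t2_lt_n eq_nth eq_rank.
case: (ltngtP t1 t2) => // [t12|t21].
  by have := occurrence_rank_ltn t12 (ltnW t2_lt_n) eq_nth; rewrite eq_rank ltnn.
by have := occurrence_rank_ltn t21 (ltnW t1_lt_n) (esym eq_nth); rewrite eq_rank ltnn.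
Qed.

End OccurrenceRank.

(* The machine follows the cycle of the distinct states [g 0, ..., g (n-1)];
   off that cycle it idles. *)
Lemma generates_of_injective_states (A : seq bool) k (g : 'I_(size A) -> state k)
    (k_gt0 : 0 < k) :
  0 < size A -> injective g -> (forall t, g t (Ordinal k_gt0) = nth false A t) ->
  exists f : machine k, generates f A.
Proof.
move=> n_gt0 g_inj g_out.
pose next (x : state k) : state k :=
  if [pick t | g t == x] is Some t then g (ordS t) else x.
have nextE t : next (g t) = g (ordS t).
  by rewrite /next; case: pickP => [t' /eqP/g_inj -> //|/(_ t)]; rewrite eqxx.
exists (fun j x => next x j), k_gt0, (g (Ordinal (ltn_pmod 0 n_gt0))) => t.
suff -> : iter t (step (fun j x => next x j)) (g (Ordinal (ltn_pmod 0 n_gt0)))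
          = g (Ordinal (ltn_pmod t n_gt0)) by rewrite g_out.
elim: t => [|t IHt]; first by congr g; apply: val_inj.
have stepE x : step (fun j x => next x j) x = next x by apply/ffunP => j; rewrite ffunE.
rewrite iterS IHt stepE nextE; congr g; apply: val_inj => /=.
by rewrite -addn1 modnDml addn1.
Qed.

Lemma generates_min_stages (A : seq bool) :
  0 < size A -> exists f : machine (min_stages A), generates f A.
Proof.
move=> n_gt0; have := count_le_min_stages A; rewrite /min_stages addn1.
set m := maxn _ _ => /= count_le.
have rank_lt (t : 'I_(size A)) : occurrence_rank false A t < #|state m|.
  rewrite card_state; apply: leq_trans (count_le (nth false A t)).
  exact: occurrence_rank_lt.
pose g (t : 'I_(size A)) := state_cons (nth false A t) (enum_val (Ordinal (rank_lt t))).
apply: (@generates_of_injective_states A m.+1 g (ltn0Sn m)) => // [s t gst|t].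
  have := congr1 (fun x : state m.+1 => x ord0) gst; rewrite /= !state_cons0 => eq_nth.
  have := congr1 (@state_tail m) gst; rewrite /= !state_consK => /enum_val_inj/(congr1 val).
  move=> eq_rank; apply/val_inj/(occurrence_rank_inj (ltn_ord s) (ltn_ord t) eq_nth eq_rank).
exact: state_cons0.
Qed.

Theorem theorem2 (A : seq bool) :
  2 <= size A -> aperiodic A ->
  (forall (k' : nat) (f : machine k'), generates f A -> min_stages A <= k') /\
  (exists f : machine (min_stages A), generates f A).
Proof.
move=> n_ge2 aperA; split; first by move=> k' f; apply: generates_min_stages_le.
by apply: generates_min_stages; apply: ltnW.
Qed.
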